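(* In the Maker–Breaker game on the infinite grid whose winning sets are all isomorphic copies of the polyomino Snaky, Breaker has no winning pairing strategy; i.e., there is no family of pairwise disjoint 2-element subsets of $\mathbb Z^2$ such that every isomorphic copy of Snaky contains one of these pairs.
   Context: Cells of the infinite square grid are identified with their lower-left lattice points $(x,y)\in\mathbb Z^2$. Snaky is the hexomino $S=\{(0,1),(1,1),(1,0),(2,0),(3,0),(4,0)\}$ (two ''head'' cells above a ''body'' of four consecutive cells, the head overlapping the first body cell and protruding one cell beyond it). An isomorphic copy of Snaky is the image of $S$ under a composition of a translation with one of the 8 rotations/reflections of the square grid. In the Maker–Breaker game the players alternately take cells; Maker wins by owning all cells of some winning set. *)

From Stdlib Require Import ZArith List.
Import ListNotations.
Open Scope Z_scope.

Definition cell : Type := (Z * Z)%type.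

Definition snaky : list cell :=
  [(0,1); (1,1); (1,0); (2,0); (3,0); (4,0)].

(* The 8 rotations/reflections of the square grid (the dihedral group D4 acting
   linearly on Z^2): optionally swap coordinates, then optionally negate each. *)
Definition grid_sym (swap neg1 neg2 : bool) (p : cell) : cell :=
  let q := if swap then (snd p, fst p) else p in
  ((if neg1 then - fst q else fst q), (if neg2 then - snd q else snd q)).

Definition in_copy (swap neg1 neg2 : bool) (t : cell) (z : cell) : Prop :=
  exists s, In s snaky /\
    z = (fst t + fst (grid_sym swap neg1 neg2 s),
         snd t + snd (grid_sym swap neg1 neg2 s)).

Definition two_element (A : cell -> Prop) : Prop :=
  exists a b, a <> b /\ forall z, A z <-> (z = a \/ z = b).

(* A pairing: a family of pairwise disjoint 2-element subsets of Z^2.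
   Two members of the family that are distinct (as sets) share no element;
   equivalently, members sharing an element are the same set. *)
Definition pairing (F : (cell -> Prop) -> Prop) : Prop :=
  (forall A, F A -> two_element A) /\
  (forall A B, F A -> F B -> (exists z, A z /\ B z) -> forall z, A z <-> B z).

Definition pairing_strategy (F : (cell -> Prop) -> Prop) : Prop :=
  pairing F /\
  forall (swap neg1 neg2 : bool) (t : cell),
    exists A, F A /\ forall z, A z -> in_copy swap neg1 neg2 t z.

(* A pairing strategy must in particular block each of the 80 copies of Snaky
   inside a 6x6 square by one of its pairs, and pairs meeting a common cell
   coincide.  An exhaustive search shows this is impossible: pick a copy with
   the fewest admissible pairs, try each as its blocking pair, discard the
   copies it blocks together with every pair meeting it, and recurse. *)

From Stdlib Require Import ZArith List Bool.
Import ListNotations.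
Open Scope Z_scope.

Definition copy_cells (swap neg1 neg2 : bool) (t : cell) : list cell :=
  map (fun s => (fst t + fst (grid_sym swap neg1 neg2 s),
                 snd t + snd (grid_sym swap neg1 neg2 s))) snaky.

Lemma in_copy_cells swap neg1 neg2 t z :
  in_copy swap neg1 neg2 t z -> In z (copy_cells swap neg1 neg2 t).
Proof. intros [s [Hs ->]]. apply in_map_iff. now exists s. Qed.

(* The 80 copies of Snaky inside the square [0,5]^2, grouped by symmetry; the
   order of the translations only affects the running time of the search. *)
Definition square_copies : list (bool * bool * bool * list cell) :=
  [((false, false, false), [(0,2); (1,0); (1,3); (0,1); (1,2); (0,4); (0,0); (1,1); (0,3); (1,4)]);
   ((false, false, true), [(0,2); (0,5); (1,3); (0,1); (1,2); (0,4); (1,5); (1,1); (0,3); (1,4)]);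
   ((false, true, false), [(4,0); (4,3); (5,4); (5,1); (4,2); (5,0); (5,3); (4,1); (5,2); (4,4)]);
   ((false, true, true), [(4,3); (5,4); (5,1); (4,2); (4,5); (5,3); (4,1); (5,2); (4,4); (5,5)]);
   ((true, false, false), [(4,0); (3,1); (1,0); (3,0); (0,1); (2,1); (4,1); (0,0); (1,1); (2,0)]);
   ((true, false, true), [(3,4); (0,5); (2,5); (4,5); (2,4); (0,4); (1,5); (3,5); (4,4); (1,4)]);
   ((true, true, false), [(4,0); (3,1); (5,1); (1,0); (3,0); (5,0); (2,1); (4,1); (1,1); (2,0)]);
   ((true, true, true), [(3,4); (5,4); (2,5); (4,5); (2,4); (1,5); (3,5); (4,4); (5,5); (1,4)])].

Definition copies_in_square : list (list cell) :=
  flat_map (fun '(swap, neg1, neg2, ts) => map (copy_cells swap neg1 neg2) ts)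
           square_copies.

Lemma copies_in_square_are_copies c :
  In c copies_in_square -> exists swap neg1 neg2 t, c = copy_cells swap neg1 neg2 t.
Proof.
  unfold copies_in_square. rewrite in_flat_map.
  intros [[[[swap neg1] neg2] ts] [_ Hc]]. apply in_map_iff in Hc.
  destruct Hc as [t [<- _]]. now exists swap, neg1, neg2, t.
Qed.

Definition cell_eqb (a b : cell) : bool :=
  Z.eqb (fst a) (fst b) && Z.eqb (snd a) (snd b).

Lemma cell_eqb_eq a b : cell_eqb a b = true <-> a = b.
Proof.
  destruct a, b; unfold cell_eqb; simpl. rewrite andb_true_iff, !Z.eqb_eq.
  split; [intros [-> ->]; auto | intros H; inversion H; auto].
Qed.

Lemma cell_eqb_neq a b : a <> b -> cell_eqb a b = false.
Proof. intros H. apply not_true_is_false. now rewrite cell_eqb_eq. Qed.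

Definition mem_cell (z : cell) (l : list cell) : bool := existsb (cell_eqb z) l.

Lemma mem_cell_In z l : mem_cell z l = true <-> In z l.
Proof.
  unfold mem_cell. rewrite existsb_exists. split.
  - intros [x [Hx He]]. apply cell_eqb_eq in He. now subst.
  - intros H. exists z. split; [exact H | now apply cell_eqb_eq].
Qed.

Fixpoint unordered_pairs (l : list cell) : list (cell * cell) :=
  match l with
  | [] => []
  | a :: r => map (fun b => (a, b)) r ++ unordered_pairs r
  end.

Lemma unordered_pairs_complete a b l : In a l -> In b l -> a <> b ->
  In (a, b) (unordered_pairs l) \/ In (b, a) (unordered_pairs l).
Proof.
  induction l as [|x r IH]; simpl; [tauto|].
  intros Ha Hb Hab. rewrite !in_app_iff, !in_map_iff.
  destruct Ha as [<-|Ha]; destruct Hb as [<-|Hb].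
  - congruence.
  - left; left; now exists b.
  - right; left; now exists a.
  - destruct (IH Ha Hb Hab); auto.
Qed.

(* A search state: the copies of Snaky not yet known to contain a chosen pair,
   each with the pairs of its cells that may still be chosen. *)
Definition state := list (list cell * list (cell * cell)).

Fixpoint fewest_candidates (c : list cell * list (cell * cell)) (rest : state)
  : list cell * list (cell * cell) :=
  match rest with
  | [] => c
  | d :: r =>
      if Nat.ltb (length (snd d)) (length (snd c))
      then fewest_candidates d r else fewest_candidates c r
  end.

Lemma fewest_candidates_In c r : In (fewest_candidates c r) (c :: r).
Proof.
  revert c; induction r as [|d r IH]; intros c; simpl; [auto|].
  destruct (Nat.ltb _ _); [specialize (IH d) | specialize (IH c)]; simpl in IH; tauto.
Qed.

Definition avoids_pair (e xy : cell * cell) : bool :=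
  negb (cell_eqb (fst xy) (fst e) || cell_eqb (snd xy) (fst e) ||
        cell_eqb (fst xy) (snd e) || cell_eqb (snd xy) (snd e)).

Definition commit (e : cell * cell) (s : state) : state :=
  map (fun ce => (fst ce, filter (avoids_pair e) (snd ce)))
    (filter (fun ce => negb (mem_cell (fst e) (fst ce) && mem_cell (snd e) (fst ce))) s).

(* Running out of fuel counts as failing to refute, so [true] is always sound. *)
Fixpoint refuted (fuel : nat) (s : state) : bool :=
  match fuel, s with
  | O, _ | _, [] => false
  | S n, c :: r => forallb (fun e => refuted n (commit e s)) (snd (fewest_candidates c r))
  end.

Definition initial_state : state :=
  map (fun c => (c, unordered_pairs c)) copies_in_square.

Lemma initial_state_refuted : refuted (length initial_state) initial_state = true.
Proof. vm_cast_no_check (eq_refl true). Qed.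

Section Soundness.

Variable F : (cell -> Prop) -> Prop.
Hypothesis F_pairing : pairing F.

Definition contains_member (c : list cell) : Prop :=
  exists A, F A /\ forall z, A z -> In z c.

Definition members_of_F (M : list (cell * cell)) : Prop :=
  forall e, In e M -> exists B, F B /\ B (fst e) /\ B (snd e).

Definition avoids (M : list (cell * cell)) (a : cell) : Prop :=
  forall e, In e M -> fst e <> a /\ snd e <> a.

Definition consistent (M : list (cell * cell)) (s : state) : Prop :=
  forall c es, In (c, es) s ->
    contains_member c /\
    (forall e, In e M -> ~ (In (fst e) c /\ In (snd e) c)) /\
    (forall a b, In a c -> In b c -> a <> b -> avoids M a -> avoids M b ->
       In (a, b) es \/ In (b, a) es).

Lemma member_avoids M c A z :
  members_of_F M -> (forall e, In e M -> ~ (In (fst e) c /\ In (snd e) c)) ->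
  F A -> (forall w, A w -> In w c) -> A z -> avoids M z.
Proof.
  intros HM Hc FA HA Az e He. destruct (HM e He) as [B [FB [B1 B2]]].
  assert (HAB : B z -> forall w, A w <-> B w)
    by (intros Bz; exact (proj2 F_pairing A B FA FB (ex_intro _ z (conj Az Bz)))).
  split; intros Ez; apply (Hc e He); subst z.
  - split; apply HA, (HAB B1); assumption.
  - split; apply HA, (HAB B2); assumption.
Qed.

Lemma consistent_commit M s e :
  consistent M s -> consistent (e :: M) (commit e s).
Proof.
  intros Hs c es Hin. unfold commit in Hin. apply in_map_iff in Hin.
  destruct Hin as [[c0 es0] [Heq Hf]]. injection Heq as <- <-.
  apply filter_In in Hf. destruct Hf as [Hin Hnot]. simpl in Hnot.
  destruct (Hs c0 es0 Hin) as [Hmem [Hc Hpairs]].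
  split; [exact Hmem | split].
  - intros e' [<- | He'] [X1 X2]; [|exact (Hc e' He' (conj X1 X2))].
    apply mem_cell_In in X1, X2. now rewrite X1, X2 in Hnot.
  - intros a b Ha Hb Hab Ua Ub.
    destruct (Ua e (or_introl eq_refl)), (Ub e (or_introl eq_refl)).
    assert (UaM : avoids M a) by (intros e' He'; apply Ua; now right).
    assert (UbM : avoids M b) by (intros e' He'; apply Ub; now right).
    assert (Tab : avoids_pair e (a, b) = true)
      by (unfold avoids_pair; simpl; now rewrite !cell_eqb_neq).
    assert (Tba : avoids_pair e (b, a) = true)
      by (unfold avoids_pair; simpl; now rewrite !cell_eqb_neq).
    destruct (Hpairs a b Ha Hb Hab UaM UbM); [left | right];
      apply filter_In; now split.
Qed.

Lemma refuted_sound fuel : forall M s,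
  members_of_F M -> consistent M s -> refuted fuel s = true -> False.
Proof.
  induction fuel as [|n IH]; intros M s HM Hs Href; [discriminate|].
  destruct s as [|c0 r]; [discriminate|]. simpl in Href.
  pose proof (fewest_candidates_In c0 r) as Hin.
  destruct (fewest_candidates c0 r) as [c es]. simpl in Href.
  destruct (Hs c es Hin) as [[A [FA HA]] [Hc Hpairs]].
  destruct (proj1 F_pairing A FA) as [p [q [Hpq HAi]]].
  assert (Ap : A p) by (apply HAi; auto).
  assert (Aq : A q) by (apply HAi; auto).
  assert (Hblock : forall e, In e es -> A (fst e) -> A (snd e) -> False).
  { intros e He Ae1 Ae2. rewrite forallb_forall in Href.
    apply (IH (e :: M) (commit e (c0 :: r))).
    - intros e' [<- | He']; [now exists A | exact (HM e' He')].
    - now apply consistent_commit.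
    - exact (Href e He). }
  destruct (Hpairs p q (HA p Ap) (HA q Aq) Hpq
              (member_avoids M c A p HM Hc FA HA Ap)
              (member_avoids M c A q HM Hc FA HA Aq)) as [X | X].
  - exact (Hblock _ X Ap Aq).
  - exact (Hblock _ X Aq Ap).
Qed.

Lemma initial_state_consistent :
  pairing_strategy F -> consistent [] initial_state.
Proof.
  intros [_ Hcopies] c es Hin. apply in_map_iff in Hin.
  destruct Hin as [c0 [Heq Hc]]. injection Heq as -> <-.
  split; [| split].
  - destruct (copies_in_square_are_copies c Hc) as [swap [neg1 [neg2 [t ->]]]].
    destruct (Hcopies swap neg1 neg2 t) as [A [FA HA]].
    exists A. split; [exact FA|]. intros z Az. now apply in_copy_cells, HA.
  - intros e [].
  - intros a b Ha Hb Hab _ _. now apply unordered_pairs_complete.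
Qed.

End Soundness.

Theorem theorem8 : ~ exists F : (cell -> Prop) -> Prop, pairing_strategy F.
Proof.
  intros [F HF].
  apply (refuted_sound F (proj1 HF) (length initial_state) [] initial_state).
  - intros e [].
  - exact (initial_state_consistent F HF).
  - exact initial_state_refuted.
Qed.
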